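(* Let $\Gamma$ be a nontrivial standard graph with minimal edge length $L_{\min}$. Let $f$ be a Morse eigenfunction of $\Gamma$ with eigenvalue $k>\frac{\pi}{L_{\min}}$, and let $\Omega$ be a Neumann domain of $f$. (1) If $\Omega$ contains a vertex $v$ of $\Gamma$ of degree $d_v>2$, then $\Omega$ is a star graph with $d_v$ edges. (2) If $\Omega$ contains no vertex of $\Gamma$ of degree greater than $2$, then $\Omega$ is a path graph (a single interval) of length $\frac{\pi}{k}$.
   Context: A metric graph is a finite connected graph $\Gamma=(\mathcal{V},\mathcal{E})$ (loops allowed) in which each edge $e$ is identified with an interval $[0,L_e]$, $L_e>0$; $d_v$ denotes the degree of vertex $v$. The Laplacian acts as $f|_e\mapsto-\frac{d^2}{dx_e^2}f|_e$ on functions in $\bigoplus_e H^2([0,L_e])$ satisfying Neumann vertex conditions at every vertex: continuity and vanishing sum of outgoing derivatives. Such a graph is standard; it is assumed to have no vertices of degree two, and it is nontrivial if it is not a single loop. Eigenvalues are written $k^2$, $k\ge0$, and $k$ is called the eigenvalue. An eigenfunction is Morse if on each edge no interior point has both $f'$ and $f''$ vanishing. A Neumann point of a Morse eigenfunction is a local extremum of $f$ that is not a vertex of degree one; a Neumann domain is the closure of a connected component of $\Gamma$ minus the Neumann points, obtained by adding a degree-one vertex at each open endpoint. A star graph is a tree with one interior vertex joined by edges to all other vertices, which have degree one; a path graph here is a graph consisting of a single edge between two vertices. *)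

From HB Require Import structures.
From mathcomp Require Import all_boot all_order all_algebra.
From mathcomp Require Import all_classical all_reals all_analysis.
Set Implicit Arguments. Unset Strict Implicit. Unset Printing Implicit Defensive.
Import Order.TTheory GRing.Theory Num.Theory.
Local Open Scope ring_scope.
Local Open Scope classical_set_scope.

(* A finite graph (loops and multiple edges allowed); edge e goes from
   [src e] to [tgt e] and is identified with [0, len e]. *)
Record metric_graph (R : realType) := MetricGraph {
  vert : finType;
  edge : finType;
  src : edge -> vert;
  tgt : edge -> vert;
  len : edge -> R }.

Section MG.
Variable R : realType.
Variable G : metric_graph R.
Local Notation V := (vert G).
Local Notation E := (edge G).
Local Notation src := (@src R G).
Local Notation tgt := (@tgt R G).
Local Notation len := (@len R G).

(* half-edges: (e,true) is the start of e (at src e), (e,false) its end *)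
Definition half_at (v : V) (h : E * bool) : bool :=
  if h.2 then src h.1 == v else tgt h.1 == v.

(* degree, loops counted twice *)
Definition deg (v : V) : nat := #|[set h : E * bool | half_at v h]|.

Definition adj (u w : V) : bool :=
  [exists e : E, ((src e == u) && (tgt e == w)) || ((src e == w) && (tgt e == u))].

Definition graph_connected : Prop := forall u w : V, connect adj u w.

Definition single_loop : Prop :=
  #|V| = 1%N /\ #|E| = 1%N /\ (forall e : E, src e = tgt e).

Definition standard_nontrivial : Prop :=
  (forall e, 0 < len e) /\ graph_connected /\ (forall v, deg v <> 2%N) /\ ~ single_loop.

Definition Lmin : R := inf (range len).

(* points of the metric graph: pairs (e, x) with 0 <= x <= len e *)
Definition valid (p : E * R) : Prop := 0 <= p.2 <= len p.1.

Definition pvert (p : E * R) : option V :=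
  if p.2 == 0 then Some (src p.1)
  else if p.2 == len p.1 then Some (tgt p.1) else None.

(* two pairs denote the same point of the metric graph *)
Definition peq (p q : E * R) : Prop :=
  valid p /\ valid q /\ (p = q \/ exists v, pvert p = Some v /\ pvert q = Some v).

Definition pball (p : E * R) (eps : R) (q : E * R) : Prop :=
  exists (e : E) (x y : R), peq p (e, x) /\ peq q (e, y) /\ `|y - x| < eps.

(* a function on the graph is given edgewise, f e : R -> R, used on [0, len e] *)
Variable f : E -> R -> R.
Definition fval (p : E * R) : R := f p.1 p.2.

Definition outder (h : E * bool) : R :=
  if h.2 then derive1 (f h.1) 0 else - derive1 (f h.1) (len h.1).

Definition eigenfunction (k : R) : Prop :=
  0 <= k /\
  (exists p, valid p /\ fval p != 0) /\
  (forall e x, derivable (f e) x 1 /\ derivable (derive1 (f e)) x 1 /\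
               derive1 (derive1 (f e)) x = - k ^+ 2 * f e x) /\
  (forall p q, peq p q -> fval p = fval q) /\
  (forall v : V, \sum_(h : E * bool | half_at v h) outder h = 0).

Definition morse : Prop :=
  forall e x, 0 < x < len e -> ~ (derive1 (f e) x = 0 /\ derive1 (derive1 (f e)) x = 0).

Definition local_max (p : E * R) : Prop :=
  valid p /\ exists eps : R, 0 < eps /\ forall q, pball p eps q -> fval q <= fval p.
Definition local_min (p : E * R) : Prop :=
  valid p /\ exists eps : R, 0 < eps /\ forall q, pball p eps q -> fval p <= fval q.

Definition deg1_vertex_pt (p : E * R) : Prop :=
  valid p /\ exists v, pvert p = Some v /\ deg v = 1%N.

Definition neumann_pt (p : E * R) : Prop :=
  (local_max p \/ local_min p) /\ ~ deg1_vertex_pt p.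

Definition off_neumann (p : E * R) : Prop := valid p /\ ~ neumann_pt p.

Inductive pconn (S : E * R -> Prop) : E * R -> E * R -> Prop :=
| pconn_seg e x y :
    (forall z, Num.min x y <= z <= Num.max x y -> S (e, z)) -> pconn S (e, x) (e, y)
| pconn_peq p q : S p -> peq p q -> pconn S p q
| pconn_trans p q r : pconn S p q -> pconn S q r -> pconn S p r.

(* C is a connected component of Gamma minus the Neumann points; the Neumann
   domain is obtained from C by closing it with a degree-one vertex at each
   open endpoint. *)
Definition neumann_component (C : E * R -> Prop) : Prop :=
  (exists p, C p) /\ forall p, C p -> forall q, C q <-> pconn off_neumann p q.

Definition hpt (h : E * bool) (t : R) : E * R :=
  if h.2 then (h.1, t) else (h.1, len h.1 - t).

Definition contains_vertex (C : E * R -> Prop) (v : V) : Prop :=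
  exists p, C p /\ valid p /\ pvert p = Some v.

(* The Neumann domain of C is a star graph centred at v with deg v edges:
   C consists of v and, for each half-edge h at v, the initial segment of h of
   length l h > 0, whose far end is a Neumann point (open end of C) or a
   degree-one vertex of Gamma; the segments of the two half-edges of a loop
   do not overlap. *)
Definition star_domain (C : E * R -> Prop) (v : V) : Prop :=
  exists l : E * bool -> R,
    (forall h, half_at v h ->
       0 < l h <= len h.1 /\
       (forall t, 0 < t < l h -> ~ neumann_pt (hpt h t)) /\
       (neumann_pt (hpt h (l h)) \/ deg1_vertex_pt (hpt h (l h)))) /\
    (forall e, src e = v -> tgt e = v -> l (e, true) + l (e, false) <= len e) /\
    (forall q, C q <->
       ((valid q /\ pvert q = Some v) \/
        exists h t, half_at v h /\ 0 < t <= l h /\ peq q (hpt h t) /\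
                    ~ neumann_pt (hpt h t))).

Definition path_domain (C : E * R -> Prop) (ell : R) : Prop :=
  exists (e : E) (a b : R),
    0 <= a /\ a < b /\ b <= len e /\ b - a = ell /\
    (neumann_pt (e, a) \/ deg1_vertex_pt (e, a)) /\
    (neumann_pt (e, b) \/ deg1_vertex_pt (e, b)) /\
    (forall y, a < y < b -> ~ neumann_pt (e, y)) /\
    (forall q, C q <-> exists y, a <= y <= b /\ peq q (e, y) /\ ~ neumann_pt (e, y)).

End MG.

From HB Require Import structures.
From mathcomp Require Import all_boot all_order all_algebra.
From mathcomp Require Import all_classical all_reals all_analysis.
From mathcomp Require Import ring lra.
Import Order.TTheory GRing.Theory Num.Theory.
Import numFieldNormedType.Exports.
Set Implicit Arguments. Unset Strict Implicit. Unset Printing Implicit Defensive.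
Local Open Scope ring_scope.

(* On every edge an eigenfunction solves [f'' = - k^2 f], so along the edge it
   equals [f a * cos (k (x - a))] for any critical point [a], and consecutive
   critical points are exactly [pi / k] apart.  Since every edge is longer than
   [pi / k], each half-edge carries a critical point within distance [pi / k] of
   its start, and interior critical points are exactly the interior Neumann
   points.  At a vertex
   that is an extremum, or has degree one, Kirchhoff's condition forces all
   outgoing derivatives to vanish.  Hence the Neumann domain through a vertex [v]
   is made of the initial segments of the half-edges at [v] up to their first
   critical points, a star; and a Neumann domain meeting only degree-one vertices
   lies on one edge between two consecutive critical points, an interval of
   length [pi / k]. *)

Section SineODE.
Variables (R : realType) (k : R) (u : R -> R).
Hypothesis k_gt0 : 0 < k.
Hypothesis u_ode : forall x, derivable u x 1 /\ derivable (derive1 u) x 1 /\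
   derive1 (derive1 u) x = - k ^+ 2 * u x.

Let k_neq0 : k != 0. Proof. by rewrite gt_eqF. Qed.

Let is_derive_shift x0 x : is_derive x (1 : R) (fun y : R => k * (y - x0)) k.
Proof. by apply: is_derive_eq; rewrite subr0 [_ *: _]mulr1. Qed.

Let is_derive_sin_shift x0 x :
  is_derive x (1 : R) (fun y : R => sin (k * (y - x0))) (cos (k * (x - x0)) * k).
Proof. exact: is_derive1_comp _ (is_derive_shift x0 x). Qed.

Let is_derive_cos_shift x0 x :
  is_derive x (1 : R) (fun y : R => cos (k * (y - x0))) (- sin (k * (x - x0)) * k).
Proof. exact: is_derive1_comp _ (is_derive_shift x0 x). Qed.

Let is_derive_u x : is_derive x (1 : R) u (derive1 u x).
Proof. by rewrite derive1E; apply/derivableP; case: (u_ode x). Qed.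

Let is_derive_u' x : is_derive x (1 : R) (derive1 u) (- k ^+ 2 * u x).
Proof. by case: (u_ode x) => _ [u'_der <-]; rewrite derive1E; apply/derivableP. Qed.

Lemma sine_ode_solution x0 x :
  u x = u x0 * cos (k * (x - x0)) + derive1 u x0 / k * sin (k * (x - x0)).
Proof.
pose C y := cos (k * (y - x0)); pose S y := sin (k * (y - x0)).
(* [(P, Q)] is [(u, u'/k)] rotated by the angle [k (y - x0)]; it is constant. *)
pose P := u * C - k^-1 \*: (derive1 u * S).
pose Q := u * S + k^-1 \*: (derive1 u * C).
have P_cst y : is_derive y (1 : R) P 0.
  apply: is_derive_eq (is_deriveB (is_deriveM (is_derive_u y) (is_derive_cos_shift x0 y))
    (is_deriveZ k^-1 (is_deriveM (is_derive_u' y) (is_derive_sin_shift x0 y)))) _.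
  rewrite /GRing.scale /= /C /S.
  move: (u y) (derive1 u y) (cos _) (sin _) => a b c d /=; by field.
have Q_cst y : is_derive y (1 : R) Q 0.
  apply: is_derive_eq (is_deriveD (is_deriveM (is_derive_u y) (is_derive_sin_shift x0 y))
    (is_deriveZ k^-1 (is_deriveM (is_derive_u' y) (is_derive_cos_shift x0 y)))) _.
  rewrite /GRing.scale /= /C /S.
  move: (u y) (derive1 u y) (cos _) (sin _) => a b c d /=; by field.
have P_val y : P y = u y * C y - k^-1 * (derive1 u y * S y) by [].
have Q_val y : Q y = u y * S y + k^-1 * (derive1 u y * C y) by [].
have := is_derive_0_is_cst x x0 P_cst; have := is_derive_0_is_cst x x0 Q_cst.
rewrite !P_val !Q_val /C /S subrr mulr0 cos0 sin0.
have := cos2Dsin2 (k * (x - x0)).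
move: (u x) (derive1 u x) (cos _) (sin _) => a b c d cs2 eQ eP.
have -> : u x0 = a * c - k^-1 * (b * d) by rewrite eP; field.
have -> : derive1 u x0 = k * (a * d + k^-1 * (b * c)) by rewrite eQ; field.
by rewrite -[LHS]mulr1 -cs2; field.
Qed.

Lemma derive1_sine_ode x : derivable (derive1 u) x 1 /\
  derivable (derive1 (derive1 u)) x 1 /\
  derive1 (derive1 (derive1 u)) x = - k ^+ 2 * derive1 u x.
Proof.
have u''E : derive1 (derive1 u) = (- k ^+ 2) \*: u.
  by apply/funext => y; case: (u_ode y) => _ [_ ->].
have D := is_deriveZ (- k ^+ 2) (is_derive_u x).
split; first by case: (u_ode x) => _ [].
by rewrite u''E; split; [case: D | rewrite derive1E derive_val].
Qed.

End SineODE.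

Lemma antiperiodic_first_zero (R : realType) (H : R -> R) (c : R) : 0 < c ->
  continuous H -> (forall x, H (x + c) = - H x) ->
  (forall a b, H a = 0 -> H b = 0 -> a != b -> c <= `|a - b|) ->
  forall x0, exists l, [/\ 0 < l <= c, H (x0 + l) = 0 &
    forall t, 0 < t < l -> H (x0 + t) != 0].
Proof.
move=> c0 cH anti gap x0.
have [H0|H0] := eqVneq (H x0) 0.
  exists c; split; [by rewrite c0 lexx | by rewrite anti H0 oppr0 |].
  move=> t /andP[t0 tc]; apply/eqP => Ht.
  have neq : x0 + t != x0 by rewrite -subr_eq0 addrAC subrr add0r gt_eqF.
  by have := gap _ _ Ht H0 neq; rewrite addrAC subrr add0r gtr0_norm // leNgt tc.
(* [H x0] and [H (x0 + c)] have opposite signs. *)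
have [z zin Hz] : exists2 z, z \in `[x0, x0 + c] & H z = 0.
  apply: IVT; [by rewrite lerDl ltW | exact: continuous_subspaceT |].
  rewrite anti ge_min le_max oppr_le0 oppr_ge0.
  by case: (leP 0 (H x0)) => h; rewrite ?lexx ?orbT //= ltW.
have zx0 : z != x0 by apply: contra_neq H0 => <-.
move: zin; rewrite in_itv /= => /andP[z1 z2].
exists (z - x0); split; [by rewrite subr_gt0 lt_def zx0 z1 lerBlDl | by rewrite addrC subrK |].
move=> t /andP[t0 tl]; apply/eqP => Ht.
have neq : x0 + t != z by apply/eqP => tz; move: tl; rewrite -tz; lra.
by have := gap _ _ Ht Hz neq; rewrite distrC ger0_norm; lra.
Qed.

Section SineODECriticalPoints.
Variables (R : realType) (k : R) (u : R -> R).
Hypothesis k_gt0 : 0 < k.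
Hypothesis u_ode : forall x, derivable u x 1 /\ derivable (derive1 u) x 1 /\
   derive1 (derive1 u) x = - k ^+ 2 * u x.
Hypothesis u_nondegenerate : forall x, ~ (u x = 0 /\ derive1 u x = 0).

Local Notation c := (pi / k).

Let c_gt0 : 0 < c. Proof. by rewrite divr_gt0 // pi_gt0. Qed.
Let kc : k * c = pi. Proof. by rewrite mulrC divfK // gt_eqF. Qed.

Lemma sine_ode_crit_cos a y : derive1 u a = 0 -> u y = u a * cos (k * (y - a)).
Proof. by move=> u'a; rewrite (sine_ode_solution k_gt0 u_ode a y) u'a !mul0r addr0. Qed.

Lemma derive1_sine_ode_solution a x :
  derive1 u x = - k * u a * sin (k * (x - a)) + derive1 u a * cos (k * (x - a)).
Proof.
rewrite (sine_ode_solution k_gt0 (derive1_sine_ode u_ode) a x).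
case: (u_ode a) => _ [_ ->]; field; by rewrite gt_eqF.
Qed.

Lemma continuous_derive1_sine_ode : continuous (derive1 u).
Proof.
move=> x; apply/differentiable_continuous/derivable1_diffP; by case: (u_ode x) => _ [].
Qed.

Lemma derive1_sine_ode_antiperiodic x : derive1 u (x + c) = - derive1 u x.
Proof.
rewrite (derive1_sine_ode_solution x) addrAC subrr add0r kc sinpi cospi.
by rewrite mulr0 add0r mulrN1.
Qed.

(* At a critical point [a], [u'(x) = - k u(a) sin (k (x - a))] with [u(a) != 0]. *)
Lemma sine_ode_crit_gap a b :
  derive1 u a = 0 -> derive1 u b = 0 -> a != b -> c <= `|a - b|.
Proof.
move=> u'a u'b ab; rewrite leNgt; apply/negP => ab_lt.
have ua : u a != 0 by apply/eqP => ua; exact: (u_nondegenerate (conj ua u'a)).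
move: u'b; rewrite (derive1_sine_ode_solution a) u'a mul0r addr0 => /eqP.
rewrite !mulf_eq0 oppr_eq0 (gt_eqF k_gt0) (negbTE ua) /=.
have kba : `|k * (b - a)| < pi by rewrite normrM gtr0_norm // -kc ltr_pM2l // distrC.
have [lab|lba|eab] := ltgtP a b; last by rewrite eab eqxx in ab.
- rewrite gt_eqF //; apply: sin_gt0_pi; rewrite mulr_gt0 ?subr_gt0 //=.
  by rewrite gtr0_norm ?mulr_gt0 ?subr_gt0 in kba.
- rewrite -oppr_eq0 -sinN -mulrN opprB gt_eqF //; apply: sin_gt0_pi.
  rewrite mulr_gt0 ?subr_gt0 //=.
  by rewrite -normrN -mulrN opprB gtr0_norm ?mulr_gt0 ?subr_gt0 in kba.
Qed.

Lemma sine_ode_next_crit x0 : exists l, [/\ 0 < l <= c, derive1 u (x0 + l) = 0 &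
  forall t, 0 < t < l -> derive1 u (x0 + t) != 0].
Proof.
exact: antiperiodic_first_zero c_gt0 continuous_derive1_sine_ode
  derive1_sine_ode_antiperiodic sine_ode_crit_gap x0.
Qed.

Lemma sine_ode_prev_crit x0 : exists l, [/\ 0 < l <= c, derive1 u (x0 - l) = 0 &
  forall t, 0 < t < l -> derive1 u (x0 - t) != 0].
Proof.
pose H x := derive1 u (- x).
have H_cont : continuous H.
  move=> x; apply: continuous_comp; first exact: oppr_continuous.
  exact: continuous_derive1_sine_ode.
have H_anti x : H (x + c) = - H x.
  rewrite /H; have -> : - x = - (x + c) + c by rewrite opprD addrNK.
  by rewrite derive1_sine_ode_antiperiodic opprK.
have H_gap a b : H a = 0 -> H b = 0 -> a != b -> c <= `|a - b|.
  move=> Ha Hb ab; have -> : a - b = - (- a - - b) by rewrite opprB opprK addrC.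
  rewrite normrN.
  by apply: sine_ode_crit_gap Ha Hb _; rewrite eqr_opp.
have [l [l_c Hl Hnz]] := antiperiodic_first_zero c_gt0 H_cont H_anti H_gap (- x0).
exists l; split => //; first by rewrite /H opprD opprK in Hl.
by move=> t /Hnz; rewrite /H opprD opprK.
Qed.

Lemma sine_ode_crit_period a : derive1 u a = 0 ->
  derive1 u (a + c) = 0 /\ forall t, 0 < t < c -> derive1 u (a + t) != 0.
Proof.
move=> u'a; split; first by rewrite derive1_sine_ode_antiperiodic u'a oppr0.
move=> t /andP[t0 tc]; apply/eqP => u'at.
have at_a : a + t != a by rewrite -subr_eq0 addrAC subrr add0r gt_eqF.
by have := sine_ode_crit_gap u'at u'a at_a; rewrite addrAC subrr add0r gtr0_norm // leNgt tc.
Qed.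

End SineODECriticalPoints.

Section OneSidedExtremum.
Variable R : realType.

Lemma derive1_right_max (g : R -> R) x d : 0 < d -> derivable g x 1 ->
  (forall y, x < y < x + d -> g y <= g x) -> derive1 g x <= 0.
Proof.
move=> d0 dg gmax; rewrite derive1E ['D_1 g x]cvg_at_rightE //.
apply: limr_le.
  rewrite -(cvg_at_rightE (fun h : R => h^-1 *: ((g \o shift x) _ - g x))) //.
  apply: cvg_trans dg; apply: cvg_app.
  move=> A [e e0 Ae]; exists e => // y ye y0; apply: Ae => //.
  exact/lt0r_neq0.
near=> h; apply: mulr_ge0_le0.
  by rewrite invr_ge0; apply: ltW; near: h; exists 1 => /=.
rewrite subr_le0 [_%:A]mulr1; apply: gmax; near: h.
exists d => // h; rewrite /= distrC subr0 => hd h0.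
by rewrite ltrDr h0 /= addrC ltrD2l (le_lt_trans (ler_norm _) hd).
Unshelve. all: by end_near. Qed.

Lemma derive1_right_min (g : R -> R) x d : 0 < d -> derivable g x 1 ->
  (forall y, x < y < x + d -> g x <= g y) -> 0 <= derive1 g x.
Proof.
move=> d0 dg gmin.
have := @derive1_right_max (- g) x d d0 (derivableN dg).
by rewrite derive1N // oppr_le0; apply => y /gmin; rewrite /= lerN2.
Qed.

End OneSidedExtremum.

Lemma between_neq_in_open (R : realType) (x y z lo hi : R) :
  lo < x < hi -> lo <= y <= hi -> Num.min x y <= z <= Num.max x y -> z != y ->
  lo < z < hi.
Proof.
move=> /andP[? ?] /andP[? ?]; rewrite ge_min le_max neq_lt.
by move=> /andP[/orP[?|?] /orP[?|?]] /orP[?|?]; apply/andP; split; lra.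
Qed.

Lemma betweenE (R : realType) (x y z : R) : (Num.min x y <= z <= Num.max x y) =
  ((x <= z) || (y <= z)) && ((z <= x) || (z <= y)).
Proof. by rewrite ge_min le_max. Qed.

Section Points.
Variables (R : realType) (G : metric_graph R).
Local Notation E := (edge G).
Local Notation L := (@len R G).

Lemma pvert_interior (e : E) x : 0 < x < L e -> pvert (e, x) = None.
Proof. by move=> /andP[x0 xL]; rewrite /pvert /= gt_eqF // lt_eqF. Qed.

Lemma pvert_src (e : E) : pvert (e, 0) = Some (src e).
Proof. by rewrite /pvert /= eqxx. Qed.

Lemma pvertP (e : E) x v : pvert (e, x) = Some v ->
  (x = 0 /\ src e = v) \/ (x = L e /\ tgt e = v).
Proof.
rewrite /pvert /=; case: eqP => [-> [<-]|_]; first by left.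
by case: eqP => [-> [<-]|//]; right.
Qed.

Lemma peq_refl (p : E * R) : valid p -> peq p p.
Proof. by move=> vp; split; [|split; [|left]]. Qed.

Lemma peq_sym (p q : E * R) : peq p q -> peq q p.
Proof.
move=> [vp [vq [->|[w [pw qw]]]]]; split=> //; split=> //; first by left.
by right; exists w.
Qed.

Lemma peq_trans (p q r : E * R) : peq p q -> peq q r -> peq p r.
Proof.
move=> [vp [vq pq]] [_ [vr qr]]; split=> //; split=> //.
case: pq => [->//|[w [pw qw]]].
case: qr => [<-|[w' [qw' rw']]]; first by right; exists w.
by right; exists w; rewrite rw' -qw' qw.
Qed.

Lemma peq_interior (e : E) x q : 0 < x < L e -> peq (e, x) q -> q = (e, x).
Proof. by move=> xL [_ [_ [->//|[w [ew _]]]]]; rewrite pvert_interior in ew. Qed.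

Lemma peq_pvert (p q : E * R) v : peq p q -> pvert p = Some v -> pvert q = Some v.
Proof. by move=> [_ [_ [<-//|[w [pw qw]]]]]; rewrite pw => -[<-]. Qed.

Lemma peq_vertex (p q : E * R) v : valid p -> valid q ->
  pvert p = Some v -> pvert q = Some v -> peq p q.
Proof. by move=> vp vq pv qv; split=> //; split=> //; right; exists v. Qed.

Lemma hpt_edge (h : E * bool) t : hpt h t = (h.1, (hpt h t).2).
Proof. by case: h => e []. Qed.

Lemma hpt_interior (h : E * bool) t : 0 < t < L h.1 -> 0 < (hpt h t).2 < L h.1.
Proof. by case: h => e [] /= /andP[? ?]; apply/andP; split; lra. Qed.

Lemma pvert_None_interior (e : E) x :
  valid (e, x) -> pvert (e, x) = None -> 0 < x < L e.
Proof.
rewrite /valid /pvert /= => /andP[x0 xL].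
case: eqP => // /eqP x_neq0; case: eqP => // /eqP x_neqL _.
by rewrite !lt_def x_neq0 x0 eq_sym x_neqL.
Qed.

Lemma pconn_l (S : E * R -> Prop) p q : pconn S p q -> S p.
Proof. by elim=> [e x y Sxy|//|//]; apply: Sxy; rewrite betweenE !lexx. Qed.

Lemma pconn_r (S : E * R -> Prop) p q : (forall a b, peq a b -> S a -> S b) ->
  pconn S p q -> S q.
Proof.
move=> S_peq; elim=> [e x y Sxy|p' q' Sp pq|//]; last exact: S_peq pq Sp.
by apply: Sxy; rewrite betweenE !lexx !orbT.
Qed.

Lemma pconn_sym (S : E * R -> Prop) p q : (forall a b, peq a b -> S a -> S b) ->
  pconn S p q -> pconn S q p.
Proof.
move=> S_peq; elim=> [e x y Sxy|p' q' Sp pq|p' q' r' _ pq _ qr].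
- by apply: pconn_seg => z; rewrite minC maxC; apply: Sxy.
- exact: pconn_peq (S_peq _ _ pq Sp) (peq_sym pq).
- exact: pconn_trans qr pq.
Qed.

Lemma pball_peq (p q : E * R) eps r : peq p q -> pball p eps r -> pball q eps r.
Proof.
move=> pq [e [x [y [px [ry yx]]]]]; exists e, x, y; split => //.
exact: peq_trans (peq_sym pq) px.
Qed.

End Points.

Section Eigenfunction.
Variables (R : realType) (G : metric_graph R) (f : edge G -> R -> R) (k : R).
Hypothesis G_std : standard_nontrivial G.
Hypothesis f_eigen : eigenfunction f k.
Hypothesis f_morse : morse f.
Hypothesis k_gt_pi_Lmin : pi / Lmin G < k.

Local Notation E := (edge G).
Local Notation V := (vert G).
Local Notation L := (@len R G).
Local Notation f' e := (derive1 (f e)).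

Lemma len_gt0 (e : E) : 0 < L e.
Proof. by case: G_std => + _; apply. Qed.

Lemma pvert_tgt (e : E) : pvert (e, L e) = Some (tgt e).
Proof. by rewrite /pvert /= gt_eqF ?len_gt0 // eqxx. Qed.

Lemma valid_src (e : E) : valid (e, 0).
Proof. by rewrite /valid /= lexx ltW ?len_gt0. Qed.

Lemma valid_tgt (e : E) : valid (e, L e).
Proof. by rewrite /valid /= lexx ltW ?len_gt0. Qed.

Lemma eigen_ode (e : E) x : derivable (f e) x 1 /\ derivable (f' e) x 1 /\
  derive1 (f' e) x = - k ^+ 2 * f e x.
Proof. by case: f_eigen => _ [_ [+ _]]; apply. Qed.

Lemma fval_peq (p q : E * R) : peq p q -> fval f p = fval f q.
Proof. by case: f_eigen => _ [_ [_ [+ _]]]; apply. Qed.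

Lemma neumann_pt_peq (p q : E * R) : peq p q -> neumann_pt f p -> neumann_pt f q.
Proof.
move=> pq [ext not_deg1]; split.
  have [_ [vq _]] := pq; have fpq := fval_peq pq.
  case: ext => [[_ [eps [e0 pmax]]]|[_ [eps [e0 pmin]]]]; [left|right]; split => //;
    exists eps; split => // r /(pball_peq (peq_sym pq)); rewrite -fpq; [exact: pmax|exact: pmin].
move=> [vq [v [qv dv]]]; apply: not_deg1; split; first by case: pq.
by exists v; split => //; exact: peq_pvert (peq_sym pq) qv.
Qed.

Lemma off_neumann_peq (p q : E * R) : peq p q -> off_neumann f p -> off_neumann f q.
Proof.
move=> pq [_ np]; split; first by case: pq => _ [].
by move=> /(neumann_pt_peq (peq_sym pq)).
Qed.

Lemma kirchhoff v : \sum_(h | half_at v h) outder f h = 0.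
Proof. by case: f_eigen => _ [_ [_ [_ +]]]; apply. Qed.

Lemma Lmin_gt0 : 0 < Lmin G.
Proof.
have [[e0 _] _] : exists p, valid p /\ fval f p != 0 by case: f_eigen => _ [].
case: (@Order.TotalTheory.arg_minP _ _ E e0 xpredT L isT) => e _ e_min.
apply: lt_le_trans (len_gt0 e) _; apply: lb_le_inf; first by exists (L e), e.
by move=> _ [e' _ <-]; exact: e_min.
Qed.

Lemma k_gt0 : 0 < k.
Proof. by apply: lt_trans k_gt_pi_Lmin; rewrite divr_gt0 ?pi_gt0 ?Lmin_gt0. Qed.

Lemma pi_div_k_gt0 : 0 < pi / k.
Proof. by rewrite divr_gt0 ?pi_gt0 ?k_gt0. Qed.

Lemma pi_div_k_lt_len (e : E) : pi / k < L e.
Proof.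
have Lmin_le : Lmin G <= L e.
  apply: ge_inf; last by exists e.
  by exists 0 => _ [e' _ <-]; exact/ltW/len_gt0.
apply: lt_le_trans Lmin_le.
by rewrite ltr_pdivrMr ?k_gt0 // mulrC -ltr_pdivrMr ?Lmin_gt0.
Qed.

(* A solution vanishing to first order is identically zero on its edge,
   which the Morse condition forbids at the midpoint. *)
Lemma eigen_nondegenerate (e : E) x : ~ (f e x = 0 /\ f' e x = 0).
Proof.
move=> [fx0 f'x0].
have f0 : f e = cst 0.
  by apply/funext => y; rewrite (sine_ode_crit_cos k_gt0 (eigen_ode e) y f'x0) fx0 mul0r.
have L0 := len_gt0 e.
have mid : 0 < L e / 2 < L e by apply/andP; split; lra.
apply: (f_morse mid); split; first by rewrite f0 derive1_cst.
by rewrite (eigen_ode e _).2.2 f0 /= mulr0.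
Qed.

Lemma pball_interior (e : E) x eps : 0 < x < L e -> 0 < eps ->
  exists2 d, 0 < d & forall y, x - d < y < x + d -> pball (e, x) eps (e, y).
Proof.
move=> /andP[x0 xL] eps0; exists (Num.min eps (Num.min x (L e - x))).
  by rewrite !lt_min eps0 x0 subr_gt0.
move=> y; set d := Num.min _ _ => /andP[xy yx].
have [de dx dL] : [/\ d <= eps, d <= x & d <= L e - x].
  by split; rewrite /d !ge_min lexx ?orbT.
have vx : valid (e, x) by rewrite /valid /= !ltW.
exists e, x, y; split; first exact: peq_refl.
split; first by apply: peq_refl; rewrite /valid /=; apply/andP; split; lra.
by rewrite ltr_norml; apply/andP; split; lra.
Qed.

(* At an interior critical point [x], [f e y = f e x * cos (k (y - x))] is extremal. *)
Lemma neumann_pt_interior (e : E) x : 0 < x < L e ->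
  neumann_pt f (e, x) <-> f' e x = 0.
Proof.
move=> xL; have vx : valid (e, x) by case/andP: xL => ? ?; rewrite /valid /= !ltW.
split=> [[ext _]|f'x0].
  rewrite derive1E; apply: derive_val.
  have [eps eps0 fext] : exists2 eps, 0 < eps &
      (forall q, pball (e, x) eps q -> fval f q <= fval f (e, x)) \/
      (forall q, pball (e, x) eps q -> fval f (e, x) <= fval f q).
    by case: ext => [[_ [eps [? ?]]]|[_ [eps [? ?]]]]; exists eps => //; [left|right].
  have [d d0 near] := pball_interior xL eps0.
  have ab : x - d <= x + d by lra.
  have x_in : x \in `]x - d, x + d[ by rewrite in_itv /=; apply/andP; split; lra.
  have der_f t : t \in `]x - d, x + d[ -> derivable (f e) t 1 by case: (eigen_ode e t).
  case: fext => fext;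
    [apply: (derive1_at_max ab der_f x_in) | apply: (derive1_at_min ab der_f x_in)];
    by move=> t; rewrite in_itv /= => /near/fext.
split; last by move=> [_ [w [ew _]]]; rewrite pvert_interior in ew.
have fx_neq0 : f e x != 0 by apply/eqP => fx0; exact: (eigen_nondegenerate (conj fx0 f'x0)).
have near_val q eps : pball (e, x) eps q -> exists y, fval f q = f e y.
  move=> [e' [x' [y [ex [qy _]]]]]; move: qy; case: (peq_interior xL ex) => -> _ qy.
  by exists y; rewrite (fval_peq qy).
have fE y := sine_ode_crit_cos k_gt0 (eigen_ode e) y f'x0.
have [fx_gt0|fx_lt0|fx0] := ltgtP 0 (f e x);
  [left | right | by rewrite -fx0 eqxx in fx_neq0];
  split => //; exists 1; split => // q /near_val [y ->];
  rewrite fE /fval /=; have := cos_le1 (k * (y - x)); nra.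
Qed.

Lemma is_derive_halfedge (h : E * bool) :
  is_derive (0 : R) (1 : R) (fun t => fval f (hpt h t)) (outder f h).
Proof.
case: h => e [] /=; rewrite /outder /hpt /fval /=.
  by rewrite derive1E; apply/derivableP; case: (eigen_ode e 0).
have D : is_derive (L e - 0) 1 (f e) (derive1 (f e) (L e)).
  by rewrite subr0 derive1E; apply/derivableP; case: (eigen_ode e (L e)).
have Dg : is_derive (0 : R) (1 : R) (fun t : R => L e - t) (-1).
  by apply: is_derive_eq; rewrite add0r mul1r.
by have := @is_derive1_comp R (f e) (fun t => L e - t) 0 _ _ D Dg; rewrite mulrN1.
Qed.

Lemma peq_vertex_hpt0 (p : E * R) v (h : E * bool) : valid p -> pvert p = Some v ->
  half_at v h -> peq p (hpt h 0).
Proof.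
move=> vp pv; case: h => e [] /= /eqP ev; rewrite /hpt /= ?subr0.
  by apply: peq_vertex (valid_src _) pv _; rewrite ?pvert_src ?ev.
by apply: peq_vertex (valid_tgt _) pv _; rewrite ?pvert_tgt ?ev.
Qed.

Lemma pball_vertex_hpt (p : E * R) v (h : E * bool) eps t : valid p -> pvert p = Some v ->
  half_at v h -> 0 <= t -> t < eps -> t <= L h.1 -> pball p eps (hpt h t).
Proof.
move=> vp pv hv t0 teps tL; exists h.1, (hpt h 0).2, (hpt h t).2.
rewrite -!hpt_edge; split; first exact: peq_vertex_hpt0 vp pv hv.
split; first by apply: peq_refl; case: h {hv} tL => e [] /= tL; rewrite /valid /=; lra.
have dist : `|(hpt h t).2 - (hpt h 0).2| = t.
  case: h {hv tL} => e [] /=; first by rewrite subr0 ger0_norm.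
  by rewrite subr0 addrAC subrr add0r normrN ger0_norm.
by rewrite dist.
Qed.

Lemma vertex_local_max_outder (p : E * R) v (h : E * bool) : pvert p = Some v ->
  local_max f p -> half_at v h -> outder f h <= 0.
Proof.
move=> pv [vp [eps [eps0 pmax]]] hv.
have [der_h <-] := is_derive_halfedge h.
rewrite -derive1E; apply: (derive1_right_max (d := Num.min eps (L h.1))) => //.
  by rewrite lt_min eps0 len_gt0.
move=> t; rewrite add0r lt_min => /and3P[t0 teps tL].
rewrite /= -(fval_peq (peq_vertex_hpt0 vp pv hv)); apply: pmax.
by apply: (pball_vertex_hpt vp pv hv); rewrite ?ltW.
Qed.

Lemma vertex_local_min_outder (p : E * R) v (h : E * bool) : pvert p = Some v ->
  local_min f p -> half_at v h -> 0 <= outder f h.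
Proof.
move=> pv [vp [eps [eps0 pmin]]] hv.
have [der_h <-] := is_derive_halfedge h.
rewrite -derive1E; apply: (derive1_right_min (d := Num.min eps (L h.1))) => //.
  by rewrite lt_min eps0 len_gt0.
move=> t; rewrite add0r lt_min => /and3P[t0 teps tL].
rewrite /= -(fval_peq (peq_vertex_hpt0 vp pv hv)); apply: pmin.
by apply: (pball_vertex_hpt vp pv hv); rewrite ?ltW.
Qed.

Lemma vertex_extremum_outder (p : E * R) v (h : E * bool) : pvert p = Some v ->
  local_max f p \/ local_min f p -> half_at v h -> outder f h = 0.
Proof.
move=> pv [pmax|pmin] hv.
- apply/eqP; rewrite -oppr_eq0; apply/eqP; move: h hv; apply: psumr_eq0P.
    by move=> h hv; rewrite oppr_ge0 (vertex_local_max_outder pv pmax hv).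
  by rewrite sumrN kirchhoff oppr0.
- move: h hv; apply: psumr_eq0P (kirchhoff v) => h hv.
  exact: vertex_local_min_outder pv pmin hv.
Qed.

Lemma deg_gt0 v (h : E * bool) : half_at v h -> (0 < deg v)%N.
Proof. by move=> hv; apply/card_gt0P; exists h; rewrite in_setE. Qed.

Lemma deg_le2_eq1 v (h : E * bool) : half_at v h -> (deg v <= 2)%N -> deg v = 1%N.
Proof.
move=> /deg_gt0 + le2; case: G_std => _ [_ [/(_ v) + _]].
by case: (deg v) le2 => [|[|[|]]].
Qed.

Lemma deg1_half_at_uniq v (h1 h2 : E * bool) : deg v = 1%N ->
  half_at v h1 -> half_at v h2 -> h1 = h2.
Proof.
move=> /mem_card1 [h0 vE] h1v h2v.
have /[!vE] /eqP -> : h1 \in [set h | half_at v h]%classic by rewrite in_setE.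
by have /[!vE] /eqP -> : h2 \in [set h | half_at v h]%classic by rewrite in_setE.
Qed.

Lemma deg1_outder v (h : E * bool) : deg v = 1%N -> half_at v h -> outder f h = 0.
Proof.
move=> deg1 hv; rewrite -(kirchhoff v) (big_pred1 h) // => h'.
by apply/idP/eqP => [h'v|->//]; exact: deg1_half_at_uniq deg1 h'v hv.
Qed.

Lemma pvert_half_at (e : E) x v : pvert (e, x) = Some v ->
  exists b, half_at v (e, b) /\ x = if b then 0 else L e.
Proof.
by case/pvertP => -[-> <-]; [exists true | exists false]; rewrite /half_at /= eqxx.
Qed.

Lemma deg1_pvert_uniq (p q : E * R) w : deg w = 1%N ->
  pvert p = Some w -> pvert q = Some w -> p = q.
Proof.
case: p q => [e1 x1] [e2 x2] deg1 /pvert_half_at [b1 [h1 ->]] /pvert_half_at [b2 [h2 ->]].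
by case: (deg1_half_at_uniq deg1 h1 h2) => -> ->.
Qed.

Lemma vertex_crit (e : E) x v : pvert (e, x) = Some v ->
  (forall h, half_at v h -> outder f h = 0) -> f' e x = 0.
Proof.
move=> /pvert_half_at [[] [hv ->]] /(_ _ hv); rewrite /outder //=.
by move/eqP; rewrite oppr_eq0 => /eqP.
Qed.

Lemma neumann_vertex_crit (e : E) x v : pvert (e, x) = Some v ->
  neumann_pt f (e, x) -> f' e x = 0.
Proof.
move=> xv [ext _]; apply: (vertex_crit xv) => h hv.
exact: vertex_extremum_outder xv ext hv.
Qed.

Definition first_crit (h : E * bool) (l : R) := [/\ 0 < l <= pi / k,
  f' h.1 (hpt h l).2 = 0 & forall t, 0 < t < l -> f' h.1 (hpt h t).2 != 0].

Lemma exists_first_crit (h : E * bool) : exists l, first_crit h l.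
Proof.
case: h => e []; rewrite /first_crit /=.
  have [l [l_c f'l f'_nz]] := sine_ode_next_crit k_gt0 (eigen_ode e) (@eigen_nondegenerate e) 0.
  rewrite add0r in f'l; exists l; split => // t /f'_nz; by rewrite add0r.
exact: sine_ode_prev_crit k_gt0 (eigen_ode e) (@eigen_nondegenerate e) (L e).
Qed.

Section FirstCrit.
Variables (h : E * bool) (l : R).
Hypothesis l_crit : first_crit h l.

Lemma first_crit_gt0 : 0 < l.
Proof. by case: l_crit => /andP[]. Qed.

Lemma first_crit_lt_len : l < L h.1.
Proof. by case: l_crit => /andP[_ l_c] _ _; apply: le_lt_trans l_c (pi_div_k_lt_len _). Qed.

Lemma first_crit_neumann : neumann_pt f (hpt h l).
Proof.
rewrite hpt_edge; apply/neumann_pt_interior; last by case: l_crit.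
by apply: hpt_interior; rewrite first_crit_gt0 first_crit_lt_len.
Qed.

Lemma before_first_crit_not_neumann t : 0 < t < l -> ~ neumann_pt f (hpt h t).
Proof.
move=> /[dup] /andP[t0 tl] tl'; rewrite hpt_edge neumann_pt_interior.
  by apply/eqP; case: l_crit => _ _; apply.
by apply: hpt_interior; rewrite t0 (lt_trans tl first_crit_lt_len).
Qed.

End FirstCrit.

Lemma off_neumann_interior (e : E) x :
  0 < x < L e -> f' e x != 0 -> off_neumann f (e, x).
Proof.
move=> xL f'x; split; first by case/andP: xL => ? ?; rewrite /valid /= !ltW.
by move/(neumann_pt_interior xL)/eqP; rewrite (negbTE f'x).
Qed.

Section StarDomain.
Variables (C : E * R -> Prop) (v : V) (p0 : E * R) (l : E * bool -> R).
Hypothesis C_pconn : forall q, C q <-> pconn (off_neumann f) p0 q.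
Hypothesis p0_off : off_neumann f p0.
Hypothesis p0_v : pvert p0 = Some v.
Hypothesis l_crit : forall h, first_crit h (l h).

Let p0_valid : valid p0. Proof. by case: p0_off. Qed.

Let l_bounds (e : E) : [/\ 0 < l (e, true), 0 < l (e, false),
  l (e, true) < L e & l (e, false) < L e].
Proof.
by split; rewrite ?(first_crit_gt0 (l_crit _)) ?(first_crit_lt_len (l_crit (e, _))).
Qed.

(* The open arms of the star: the initial segments of the half-edges at [v]
   before their first critical points. *)
Definition on_arm (e : E) x := (src e = v /\ 0 <= x < l (e, true)) \/
  (tgt e = v /\ L e - l (e, false) < x <= L e).

Definition in_star q := exists (e : E) x, peq q (e, x) /\ on_arm e x.

Lemma on_arm_off (e : E) x : on_arm e x -> off_neumann f (e, x).
Proof.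
have [l1 l2 l1L l2L] := l_bounds e.
have [_ _ nz1] := l_crit (e, true); have [_ _ nz2] := l_crit (e, false).
rewrite /= in nz1 nz2.
case=> [[ev /andP[x0 xl]]|[ev /andP[x0 xl]]].
- have [->|x_neq0] := eqVneq x 0.
    have ev' : half_at v (e, true) by rewrite /half_at /= ev.
    exact: off_neumann_peq (peq_vertex_hpt0 p0_valid p0_v ev') p0_off.
  by apply: off_neumann_interior; [|apply: nz1]; apply/andP; split; lra.
- have [->|x_neqL] := eqVneq x (L e).
    have ev' : half_at v (e, false) by rewrite /half_at /= ev.
    have := off_neumann_peq (peq_vertex_hpt0 p0_valid p0_v ev') p0_off.
    by rewrite /hpt /= subr0.
  apply: off_neumann_interior; first by apply/andP; split; lra.
  have := nz2 (L e - x); rewrite (_ : L e - (L e - x) = x); last by ring.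
  by apply; apply/andP; split; lra.
Qed.

Lemma on_arm_reach (e : E) x : on_arm e x -> pconn (off_neumann f) p0 (e, x).
Proof.
have [l1 l2 l1L l2L] := l_bounds e.
case=> [[ev /andP[x0 xl]]|[ev /andP[x0 xl]]].
- have ev' : half_at v (e, true) by rewrite /half_at /= ev.
  apply: pconn_trans (pconn_peq p0_off (peq_vertex_hpt0 p0_valid p0_v ev')) _.
  apply: pconn_seg => z; rewrite betweenE => /andP[/orP[?|?] /orP[?|?]];
    apply: on_arm_off; left; split => //; apply/andP; split; lra.
- have ev' : half_at v (e, false) by rewrite /half_at /= ev.
  have := pconn_peq p0_off (peq_vertex_hpt0 p0_valid p0_v ev'); rewrite /hpt /= subr0.
  move/pconn_trans; apply; apply: pconn_seg => z.
  rewrite betweenE => /andP[/orP[?|?] /orP[?|?]];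
    apply: on_arm_off; right; split => //; apply/andP; split; lra.
Qed.

Lemma on_arm_vertex (e : E) x : pvert (e, x) = Some v -> on_arm e x.
Proof.
have [l1 l2 _ _] := l_bounds e; have L0 := len_gt0 e.
by case/pvertP => [[-> ev]|[-> ev]]; [left | right]; split => //; apply/andP; split; lra.
Qed.

Lemma on_arm_pvert (e : E) x w : on_arm e x -> pvert (e, x) = Some w -> w = v.
Proof.
have [_ _ l1L l2L] := l_bounds e.
by case=> -[ev /andP[? ?]] /pvertP [[x0 <-]|[xL <-]] //; exfalso; lra.
Qed.

Lemma on_arm_peq (e1 : E) x1 (e : E) x : peq (e1, x1) (e, x) -> on_arm e x -> on_arm e1 x1.
Proof.
move=> [_ [_ [[-> ->]//|[w [e1w ew]]]]] arm.
by apply: on_arm_vertex; rewrite e1w (on_arm_pvert arm ew).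
Qed.

(* A Neumann-free segment cannot cross the first critical point of an arm. *)
Lemma on_arm_seg (e : E) x y : on_arm e x ->
  (forall z, Num.min x y <= z <= Num.max x y -> off_neumann f (e, z)) -> on_arm e y.
Proof.
have [l1 l2 l1L l2L] := l_bounds e.
move=> arm off_seg.
have y_in : Num.min x y <= y <= Num.max x y by rewrite betweenE !lexx !orbT.
have [/andP[y0 yL] _] := off_seg y y_in.
case: arm => [[ev /andP[x0 xl]]|[ev /andP[xl xL]]].
- left; split => //; rewrite y0 ltNge; apply/negP => ly.
  have l_in : Num.min x y <= l (e, true) <= Num.max x y.
    by rewrite betweenE ly (ltW xl) !orbT.
  by have [_ []] := off_seg _ l_in; exact: (first_crit_neumann (l_crit (e, true))).
- right; split => //; rewrite yL andbT ltNge; apply/negP => yl.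
  have l_in : Num.min x y <= L e - l (e, false) <= Num.max x y.
    by rewrite betweenE yl (ltW xl) orbT.
  by have [_ []] := off_seg _ l_in; exact: (first_crit_neumann (l_crit (e, false))).
Qed.

Lemma in_star_pconn p q : pconn (off_neumann f) p q -> in_star p -> in_star q.
Proof.
elim=> [e1 x y off_seg|p' q' _ pq|p' q' r' _ IH1 _ IH2].
- move=> [e [x' [pe arm]]]; exists e1, y.
  split; last exact: on_arm_seg (on_arm_peq pe arm) off_seg.
  by apply: peq_refl; case: (off_seg y _); rewrite // betweenE !lexx !orbT.
- by move=> [e [x' [pe arm]]]; exists e, x'; split => //; exact: peq_trans (peq_sym pq) pe.
- by move=> /IH1 /IH2.
Qed.

Lemma in_star_component q : in_star q <-> C q.
Proof.
split=> [[e [x [pq arm]]]|/C_pconn Cq].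
  exact/C_pconn/(pconn_trans (on_arm_reach arm) (pconn_peq (on_arm_off arm) (peq_sym pq))).
apply: in_star_pconn Cq _; case: p0 p0_valid p0_v => e x vp pv.
by exists e, x; split; [exact: peq_refl | exact: on_arm_vertex].
Qed.

Lemma in_star_spec q : in_star q <-> (valid q /\ pvert q = Some v) \/
  exists h t, half_at v h /\ 0 < t <= l h /\ peq q (hpt h t) /\ ~ neumann_pt f (hpt h t).
Proof.
split=> [[e [x [pq arm]]]|].
  have [vq _] := pq; have [l1 l2 l1L l2L] := l_bounds e.
  case: arm => [[ev /andP[x0 xl]]|[ev /andP[xl xL]]].
  - have [x_eq0|x_neq0] := eqVneq x 0.
      by left; split => //; apply: peq_pvert (peq_sym pq) _; rewrite x_eq0 pvert_src ev.
    right; exists (e, true), x; split; first by rewrite /half_at /= ev.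
    split; first by rewrite ltW // andbT lt_def x_neq0.
    split => //; apply: (before_first_crit_not_neumann (l_crit _)).
    by rewrite lt_def x_neq0 x0.
  - have [x_eqL|x_neqL] := eqVneq x (L e).
      by left; split => //; apply: peq_pvert (peq_sym pq) _; rewrite x_eqL pvert_tgt ev.
    have xE : hpt (e, false) (L e - x) = (e, x) by rewrite /hpt /=; congr pair; ring.
    right; exists (e, false), (L e - x); split; first by rewrite /half_at /= ev.
    split; first by apply/andP; split; lra.
    rewrite xE; split => //; rewrite -xE.
    by apply: (before_first_crit_not_neumann (l_crit _)); apply/andP; split; lra.
case=> [[vq qv]|[[e b] [t [hv [/andP[t0 tl] [pq nn]]]]]].
  case: q vq qv => e x vq qv; exists e, x; split; [exact: peq_refl | exact: on_arm_vertex].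
have tl' : t < l (e, b).
  rewrite lt_def tl andbT; apply/eqP => lE; apply: nn; rewrite -lE.
  exact: (first_crit_neumann (l_crit _)).
have [_ _ l1L l2L] := l_bounds e.
move: hv pq {nn}; case: b tl tl' => tl tl' /eqP ev pq.
- by exists e, t; split => //; left; split => //; rewrite ltW.
- exists e, (L e - t); split => //; right; split => //; apply/andP; split; lra.
Qed.

Lemma star_domain_of_component : star_domain f C v.
Proof.
exists l; split; [|split].
- move=> h hv; have lh := l_crit h; split.
    by rewrite (first_crit_gt0 lh) ltW ?(first_crit_lt_len lh).
  by split; [exact: before_first_crit_not_neumann | left; exact: first_crit_neumann].
- move=> e _ _; rewrite leNgt; apply/negP => l_sum.
  have [_ _ nz1] := l_crit (e, true); have [_ f'l2 _] := l_crit (e, false).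
  have [_ l2 _ l2L] := l_bounds e.
  have /nz1 : 0 < L e - l (e, false) < l (e, true) by apply/andP; split; lra.
  by rewrite /= f'l2 eqxx.
- by move=> q; rewrite -in_star_component in_star_spec.
Qed.

End StarDomain.

Section PathDomain.
Variables (C : E * R -> Prop) (p0 : E * R).
Hypothesis C_pconn : forall q, C q <-> pconn (off_neumann f) p0 q.
Hypothesis p0_off : off_neumann f p0.
Hypothesis C_deg_le2 : forall w, contains_vertex C w -> (deg w <= 2)%N.

Lemma component_off q : C q -> off_neumann f q.
Proof. by move/C_pconn; apply: pconn_r; exact: off_neumann_peq. Qed.

Lemma component_pconn_closed p q : C p -> pconn (off_neumann f) p q -> C q.
Proof. by move=> /C_pconn p0p pq; apply/C_pconn/(pconn_trans p0p pq). Qed.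

Lemma component_vertex_crit (e : E) x w : C (e, x) -> pvert (e, x) = Some w ->
  deg w = 1%N /\ f' e x = 0.
Proof.
move=> Cx xw; have [b [hb _]] := pvert_half_at xw.
have deg1 : deg w = 1%N.
  apply: (deg_le2_eq1 hb); apply: C_deg_le2.
  by exists (e, x); split => //; split => //; case: (component_off Cx).
by split => //; apply: (vertex_crit xw) => h hv; exact: deg1_outder deg1 hv.
Qed.

Lemma component_interior_noncrit :
  exists (e : E) x, [/\ 0 < x < L e, f' e x != 0 & C (e, x)].
Proof.
have C_p0 : C p0 by apply/C_pconn/pconn_peq => //; apply: peq_refl; case: p0_off.
case: p0 p0_off C_p0 => e x0 [vx0 nx0] Cx0.
case x0v: (pvert (e, x0)) => [v|]; last first.
  have x0L := pvert_None_interior vx0 x0v; exists e, x0; split => //.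
  by apply: contra_notN nx0 => /eqP f'0; exact/(neumann_pt_interior x0L).
have [l l_crit] := choice exists_first_crit.
have [l1 l1L] := (first_crit_gt0 (l_crit (e, true)), first_crit_lt_len (l_crit (e, true))).
have [l2 l2L] := (first_crit_gt0 (l_crit (e, false)), first_crit_lt_len (l_crit (e, false))).
have [_ _ nz1] := l_crit (e, true); have [_ _ nz2] := l_crit (e, false).
rewrite /= in l1L l2L nz1 nz2.
have reach y : on_arm v l e y -> C (e, y).
  by move/(on_arm_reach (conj vx0 nx0) x0v l_crit)/(component_pconn_closed Cx0).
case/pvertP: x0v => -[_ ev].
- exists e, (l (e, true) / 2); split; first by apply/andP; split; lra.
    by apply: nz1; apply/andP; split; lra.
  by apply: reach; left; split => //; apply/andP; split; lra.
- exists e, (L e - l (e, false) / 2); split; first by apply/andP; split; lra.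
    by apply: nz2; apply/andP; split; lra.
  by apply: reach; right; split => //; apply/andP; split; lra.
Qed.

Section Window.
Variables (e : E) (x1 a0 : R).
Local Notation b0 := (a0 + pi / k).
Hypothesis x1_C : C (e, x1).
Hypotheses (x1_gt0 : 0 < x1) (x1_lt_len : x1 < L e).
Hypotheses (a0_lt_x1 : a0 < x1) (x1_lt_b0 : x1 < b0).
Hypothesis a0_crit : f' e a0 = 0.
Hypothesis b0_crit : f' e b0 = 0.
Hypothesis window_noncrit : forall z, a0 < z < b0 -> f' e z != 0.

(* [lra] ignores section hypotheses, so the proofs below copy them into the context. *)

Lemma window_C y : a0 <= y <= b0 -> 0 <= y <= L e -> off_neumann f (e, y) -> C (e, y).
Proof.
move=> y_ab y_L y_off; apply: component_pconn_closed x1_C _; apply: pconn_seg => z z_in.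
have [->//|z_neq_y] := eqVneq z y.
have x1_L : 0 < x1 < L e by rewrite x1_gt0.
have x1_ab : a0 < x1 < b0 by rewrite a0_lt_x1.
apply: off_neumann_interior; first exact: between_neq_in_open x1_L y_L z_in z_neq_y.
by apply: window_noncrit; exact: between_neq_in_open x1_ab y_ab z_in z_neq_y.
Qed.

Lemma window_vertex z w : pvert (e, z) = Some w -> a0 <= z <= b0 ->
  f' e z = 0 /\ (neumann_pt f (e, z) \/ deg1_vertex_pt (e, z)).
Proof.
move=> zw z_ab.
have vz : valid (e, z) by case/pvertP: zw => -[-> _]; [exact: valid_src | exact: valid_tgt].
have [nz|not_nz] := EM (neumann_pt f (e, z)).
  by split; [exact: neumann_vertex_crit zw nz | left].
have [deg1 f'z] := component_vertex_crit (window_C z_ab vz (conj vz not_nz)) zw.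
by split => //; right; split => //; exists w.
Qed.

Lemma window_ge0 : 0 <= a0.
Proof.
rewrite leNgt; apply/negP => a0_lt0; have L0 := len_gt0 e.
have : a0 < 0 < b0 by move: (x1_gt0) (x1_lt_b0) => ? ?; apply/andP; split; lra.
move=> /[dup] /andP[_ /ltW b0_ge0] /window_noncrit/negP; apply.
by case: (window_vertex (pvert_src e) (_ : a0 <= 0 <= b0)) => [|->//]; rewrite ltW.
Qed.

Lemma window_le_len : b0 <= L e.
Proof.
rewrite leNgt; apply/negP => b0_gtL; have L0 := len_gt0 e.
have : a0 < L e < b0 by move: (x1_lt_len) (a0_lt_x1) => ? ?; apply/andP; split; lra.
move=> /[dup] /andP[/ltW a0_le _] /window_noncrit/negP; apply.
by case: (window_vertex (pvert_tgt e) (_ : a0 <= L e <= b0)) => [|->//]; rewrite a0_le ltW.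
Qed.

Lemma window_end z : f' e z = 0 -> a0 <= z <= b0 ->
  neumann_pt f (e, z) \/ deg1_vertex_pt (e, z).
Proof.
move=> f'z z_ab; case zv: (pvert (e, z)) => [w|]; first exact: (window_vertex zv z_ab).2.
have a0_ge0 := window_ge0; have b0_le := window_le_len.
have vz : valid (e, z) by rewrite /valid /=; apply/andP; split; lra.
by left; apply/(neumann_pt_interior (pvert_None_interior vz zv)).
Qed.

Lemma window_inner_not_neumann y : a0 < y < b0 -> ~ neumann_pt f (e, y).
Proof.
move=> y_ab; have a0_ge0 := window_ge0; have b0_le := window_le_len.
have yL : 0 < y < L e by apply/andP; split; lra.
by case: (off_neumann_interior yL (window_noncrit y_ab)).
Qed.

Lemma window_peq q y :
  a0 <= y <= b0 -> ~ neumann_pt f (e, y) -> peq q (e, y) -> q = (e, y).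
Proof.
move=> y_ab not_ny [_ [_ [->//|[w [qw yw]]]]].
have [_ [//|[_ [w' [yw' deg1]]]]] := window_vertex yw y_ab.
by move: deg1; rewrite yw in yw'; case: yw' => <- deg1; apply: deg1_pvert_uniq deg1 qw yw.
Qed.

Definition in_window q := exists y, a0 <= y <= b0 /\ peq q (e, y) /\ ~ neumann_pt f (e, y).

Lemma in_window_pconn p q : pconn (off_neumann f) p q -> in_window p -> in_window q.
Proof.
elim=> [e1 x y off_seg|p' q' _ pq|p' q' r' _ IH1 _ IH2].
- move=> [y0 [y0_ab [pe nn]]].
  case: (window_peq y0_ab nn pe) => ? ?; subst e1 x.
  have y_in : Num.min y0 y <= y <= Num.max y0 y by rewrite betweenE !lexx !orbT.
  have [/andP[y_ge0 y_le] y_nn] := off_seg y y_in; rewrite /= in y_ge0 y_le.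
  have a0_ge0 := window_ge0; have b0_le := window_le_len.
  move: y0_ab (x1_lt_len) (a0_lt_x1) (x1_gt0) (x1_lt_b0) => /andP[a0y0 y0b0] ? ? ? ?.
  exists y; split; last by split => //; apply: peq_refl; rewrite /valid /= y_ge0.
  apply/andP; split; rewrite leNgt; apply/negP => y_out.
  + have a0_in : Num.min y0 y <= a0 <= Num.max y0 y.
      by rewrite betweenE (ltW y_out) a0y0 orbT.
    have a0_L : 0 < a0 < L e by apply/andP; split; lra.
    by have [_ []] := off_seg a0 a0_in; apply/(neumann_pt_interior a0_L).
  + have b0_in : Num.min y0 y <= b0 <= Num.max y0 y.
      by rewrite betweenE (ltW y_out) y0b0 orbT.
    have b0_L : 0 < b0 < L e by apply/andP; split; lra.
    by have [_ []] := off_seg b0 b0_in; apply/(neumann_pt_interior b0_L).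
- move=> [y0 [y0_ab [pe nn]]]; exists y0; split => //; split => //.
  exact: peq_trans (peq_sym pq) pe.
- by move=> /IH1 /IH2.
Qed.

Lemma component_in_window q : C q <-> in_window q.
Proof.
split=> [/C_pconn p0q|[y [y_ab [qy y_nn]]]].
  have x1_in : in_window (e, x1).
    exists x1; split; first by rewrite !ltW.
    split; last by apply: window_inner_not_neumann; rewrite a0_lt_x1.
    by apply: peq_refl; rewrite /valid /= !ltW.
  apply: in_window_pconn x1_in.
  have /C_pconn p0x1 := x1_C.
  exact: pconn_trans (pconn_sym off_neumann_peq p0x1) p0q.
have := window_ge0; have := window_le_len; move: y_ab => /andP[a0y yb0] ? ?.
have y_off : off_neumann f (e, y) by split => //; rewrite /valid /=; apply/andP; split; lra.
have y_C : C (e, y) by apply: window_C => //; apply/andP; split; lra.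
exact: component_pconn_closed y_C (pconn_peq y_off (peq_sym qy)).
Qed.

Lemma window_path_domain : path_domain f C (pi / k).
Proof.
have a0_ge0 := window_ge0; have b0_le := window_le_len; have c0 := pi_div_k_gt0.
exists e, a0, b0; split => //; split; first by rewrite ltrDl.
split => //; split; first by rewrite addrAC subrr add0r.
split; first by apply: window_end a0_crit _; rewrite lexx lerDl ltW.
split; first by apply: window_end b0_crit _; rewrite lexx lerDl ltW.
by split; [exact: window_inner_not_neumann | exact: component_in_window].
Qed.

End Window.

Lemma path_domain_of_component : path_domain f C (pi / k).
Proof.
have [e [x1 [x1_L f'x1 x1_C]]] := component_interior_noncrit.
have [l [/andP[l_gt0 l_le] f'a0 _]] :=
  sine_ode_prev_crit k_gt0 (eigen_ode e) (@eigen_nondegenerate e) x1.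
have [f'b0 nz] := sine_ode_crit_period k_gt0 (eigen_ode e) (@eigen_nondegenerate e) f'a0.
have window_noncrit z : x1 - l < z < x1 - l + pi / k -> f' e z != 0.
  move=> /andP[z1 z2]; have := nz (z - (x1 - l)); rewrite (addrC (x1 - l)) subrK; apply.
  by apply/andP; split; lra.
have x1_lt_b0 : x1 < x1 - l + pi / k.
  rewrite lt_neqAle; apply/andP; split; last by lra.
  by apply: contraNneq f'x1 => ->; rewrite f'b0.
case/andP: x1_L => x1_gt0 x1_lt_len.
by apply: (window_path_domain x1_C x1_gt0 x1_lt_len _ x1_lt_b0 f'a0 f'b0 window_noncrit); lra.
Qed.

End PathDomain.

End Eigenfunction.

Unset Implicit Arguments.

Theorem lemma8p2 (R : realType) (G : metric_graph R) (f : edge G -> R -> R) (k : R)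
  (C : edge G * R -> Prop) :
  standard_nontrivial G ->
  eigenfunction f k ->
  morse f ->
  pi / Lmin G < k ->
  neumann_component f C ->
  (forall v : vert G, contains_vertex C v -> (2 < deg v)%N -> star_domain f C v) /\
  ((forall v : vert G, contains_vertex C v -> (deg v <= 2)%N) ->
     path_domain f C (pi / k)).
Proof.
move=> G_std f_eigen f_morse k_gt [[p0 C_p0] C_pconn].
split=> [v [p [C_p [_ pv]]] _ | deg_le2].
- have [l l_crit] := choice (exists_first_crit G_std f_eigen f_morse k_gt).
  have p_off := pconn_l ((C_pconn p C_p p).1 C_p).
  exact: star_domain_of_component (C_pconn p C_p) p_off pv l_crit.
- have p0_off := pconn_l ((C_pconn p0 C_p0 p0).1 C_p0).
  exact: path_domain_of_component (C_pconn p0 C_p0) p0_off deg_le2.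
Qed.
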